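(* Let $y\ge1$ and let $k\ge2$ be an integer. For $\Re s>1$ let $f_y(s)=\sum_{n>y}\mu(n)n^{-s}$, and let $\sum_{d=1}^\infty a_d d^{-s}$ be the Dirichlet series of $\zeta(s)f_y(ks)$ (valid for $\Re s>1$). Then $|a_d|\le y$ for every $d\ge1$.
   Context: $\mu$ denotes the Möbius function and $\zeta$ the Riemann zeta-function; the sum defining $f_y$ runs over integers $n>y$. *)

From mathcomp Require Import all_boot all_order all_algebra.
From mathcomp Require Import reals.
Set Implicit Arguments. Unset Strict Implicit. Unset Printing Implicit Defensive.
Import Order.TTheory GRing.Theory Num.Theory.
Local Open Scope ring_scope.

Definition mobius (n : nat) : int :=
  if n == 0%N then 0
  else if [exists p : 'I_n.+1, (prime p && (p * p %| n)%N)] then 0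
  else (-1) ^+ size (primes n).

(* Coefficients of the Dirichlet series f_y(k s) = sum_{n > y} mu(n) n^{-ks}:
   coefficient of m^{-s} is mu(n) if m = n^k with n > y, else 0. *)
Definition fyk_coef {R : realType} (k : nat) (y : R) (m : nat) : int :=
  \sum_(1 <= n < m.+1 | (y < n%:R) && (n ^ k == m)%N) mobius n.

(* Coefficient a_d of the Dirichlet series of zeta(s) f_y(ks): the Dirichlet
   convolution of the constant-1 sequence (zeta) with fyk_coef. *)
Definition zeta_fy_coef {R : realType} (k : nat) (y : R) (d : nat) : int :=
  \sum_(1 <= m < d.+1 | (m %| d)%N) fyk_coef k y m.

From mathcomp Require Import all_boot all_order all_algebra.
From mathcomp Require Import reals.
From mathcomp Require Import zify.
Set Implicit Arguments. Unset Strict Implicit. Unset Printing Implicit Defensive.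
Import Order.TTheory GRing.Theory Num.Theory.
Local Open Scope ring_scope.

(* For d >= 1 the coefficient a_d = zeta_fy_coef k y d is, after exchanging
   the two sums of the Dirichlet convolution, the restricted sum
       a_d = \sum_{y < n, n^k | d} mu(n).
   - If no n > y has n^k | d, then a_d = 0 <= y.
   - Otherwise (since y >= 1) some prime p satisfies p^k | d, and then the
     complete sum \sum_{n^k | d} mu(n) vanishes: grouping each n prime to p
     with n p, we have mu(n p) = - mu(n) and (n p)^k | d iff n^k | d, while
     mu(n p) = 0 when p | n.  Hence a_d = - \sum_{n <= y, n^k | d} mu(n), a
     sum of at most y terms of absolute value <= 1.
   The file first proves facts about finite sums over natural ranges (support
   and the prime pairing argument), then the needed properties of the Moebius
   function, then the rewriting of a_d, the counting bound, and finally the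
   theorem. *)

Lemma sum_nat_support (V : nmodType) (F : nat -> V) a b N :
  (forall n, ~~ (a <= n < b)%N -> F n = 0) -> (b <= N)%N ->
  \sum_(a <= n < b) F n = \sum_(0 <= n < N) F n.
Proof.
move=> F0 bN; have [ab | ba] := leqP a b; last first.
  by rewrite big_geq ?(ltnW ba) // big1 // => n _; apply: F0; lia.
rewrite (big_cat_nat (leq0n a) (leq_trans ab bN)) /= (big_cat_nat ab bN) /=.
rewrite [\sum_(0 <= n < a) _]big1_seq ?[\sum_(b <= n < N) _]big1_seq ?add0r ?addr0 //.
  by move=> n; rewrite mem_index_iota => /andP[_ /andP[bn _]]; apply: F0; lia.
by move=> n; rewrite mem_index_iota => /andP[_ /andP[_ na]]; apply: F0; lia.
Qed.

Lemma eq_sum_nat_support (V : nmodType) (F : nat -> V) a b c e :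
  (forall n, ~~ (a <= n < b)%N -> F n = 0) ->
  (forall n, ~~ (c <= n < e)%N -> F n = 0) ->
  \sum_(a <= n < b) F n = \sum_(c <= n < e) F n.
Proof.
move=> Fab Fce.
by rewrite (sum_nat_support Fab (leq_addr e b)) (sum_nat_support Fce (leq_addl b e)).
Qed.

Lemma sum_multiples (V : nmodType) (F : nat -> V) p N : (0 < p)%N ->
  \sum_(0 <= n < N * p | (p %| n)%N) F n = \sum_(0 <= i < N) F (i * p).
Proof.
move=> p0; rewrite big_mkcond big_nat_mul; apply: eq_bigr => i _.
rewrite big_ltn ?ltn_pmul2r // dvdn_mull // big1_seq /= ?addr0 //.
move=> n; rewrite mem_index_iota => /andP[lo hi].
case: ifP => // /dvdnP[q def_n]; move: lo hi; rewrite def_n !ltn_pmul2r // => iq.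
by rewrite ltnS leqNgt iq.
Qed.

Lemma sum_prime_pairing (V : zmodType) (F : nat -> V) p N : (0 < p)%N ->
  (forall n, (N <= n)%N -> F n = 0) ->
  (forall j, F (j * p) = if (p %| j)%N then 0 else - F j) ->
  \sum_(0 <= n < N) F n = 0.
Proof.
move=> p0 F0 Fmul; have NNp : (N <= N * p)%N by rewrite leq_pmulr.
pose Fcoprime n := if ~~ (p %| n)%N then F n else 0.
have supp (G : nat -> V) : (forall n, (N <= n)%N -> G n = 0) ->
    \sum_(0 <= n < N) G n = \sum_(0 <= n < N * p) G n.
  by move=> G0; apply: (sum_nat_support _ NNp) => n; rewrite /= -leqNgt; apply: G0.
rewrite supp // (bigID (fun n => p %| n)%N) /= sum_multiples //.
have -> : \sum_(0 <= n < N * p | ~~ (p %| n)%N) F n = \sum_(0 <= n < N) Fcoprime n.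
  by rewrite big_mkcond supp // => n /F0 Fn0; rewrite /Fcoprime Fn0 if_same.
rewrite -big_split big1 // => i _.
by rewrite Fmul /Fcoprime; case: ifP => _ /=; rewrite ?addr0 ?addNr.
Qed.

Lemma square_prime_divisorP n : (0 < n)%N ->
  reflect (exists2 p, prime p & (p * p %| n)%N)
          [exists p : 'I_n.+1, prime p && (p * p %| n)%N].
Proof.
move=> n0; apply: (iffP existsP) => [[p /andP[pp ppn]] | [p pp ppn]].
  by exists p.
have lt_pn : (p < n.+1)%N.
  by rewrite ltnS (leq_trans _ (dvdn_leq n0 ppn)) // leq_pmulr ?prime_gt0.
by exists (Ordinal lt_pn); rewrite /= pp.
Qed.

(* The convention mu(0) = 0 makes the index n = 0 harmless in all sums. *)
Lemma mobius0 : mobius 0 = 0. Proof. by []. Qed.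

Lemma mobius_square p n : prime p -> (p * p %| n)%N -> mobius n = 0.
Proof.
move=> pp ppn; rewrite /mobius; case: eqP => // /eqP; rewrite -lt0n => n0.
by case: (square_prime_divisorP n0) => // -[]; exists p.
Qed.

Lemma mobiusMprime p n : prime p -> ~~ (p %| n)%N -> (0 < n)%N ->
  mobius (n * p) = - mobius n.
Proof.
move=> pp pNn n0; have np0 : (0 < n * p)%N by rewrite muln_gt0 n0 prime_gt0.
rewrite /mobius (negPf (lt0n_neq0 np0)) (negPf (lt0n_neq0 n0)).
have -> : [exists q : 'I_(n * p).+1, prime q && (q * q %| n * p)%N] =
          [exists q : 'I_n.+1, prime q && (q * q %| n)%N].
  apply/(square_prime_divisorP np0)/(square_prime_divisorP n0).
    move=> [q qp qqnp]; exists q => //.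
    have [eq_qp | qNp] := eqVneq q p.
      by move: qqnp; rewrite eq_qp dvdn_pmul2r ?prime_gt0 // (negPf pNn).
    have cop : coprime (q * q) p by rewrite coprimeMl prime_coprime // dvdn_prime2 // qNp.
    by rewrite -(Gauss_dvdl _ cop).
  by move=> [q qp qqn]; exists q; rewrite ?dvdn_mulr.
case: ifP => // _.
have -> : size (primes (n * p)) = (size (primes n)).+1.
  rewrite -[RHS]/(size (p :: primes n)); apply/perm_size/uniq_perm.
  - exact: primes_uniq.
  - by rewrite /= primes_uniq mem_primes pp n0 (negPf pNn).
  by move=> q; rewrite (primesM _ n0 (prime_gt0 pp)) (primes_prime pp) !inE orbC.
by rewrite (exprS (-1 : int)) mulN1r.
Qed.

Lemma mobius_norm n : `|mobius n| <= 1.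
Proof.
rewrite /mobius; case: ifP => _ //; case: ifP => _ //.
by rewrite normrX normrN1 expr1n.
Qed.

Definition mobius_kdiv (k d n : nat) : int :=
  if (n ^ k %| d)%N then mobius n else 0.

(* When p^k | d, multiplying by p flips the sign of mobius_kdiv on integers
   prime to p, and kills it on multiples of p: the hypothesis of the
   pairing lemma. *)
Lemma mobius_kdivMprime k d p j : prime p -> (p ^ k %| d)%N ->
  mobius_kdiv k d (j * p) = if (p %| j)%N then 0 else - mobius_kdiv k d j.
Proof.
move=> pp pkd; rewrite /mobius_kdiv; case pj: (p %| j)%N.
  by rewrite (mobius_square pp (dvdn_mul pj (dvdnn p))) if_same.
have j0 : (0 < j)%N by case: j pj => //; rewrite dvdn0.
have cop : coprime (j ^ k) (p ^ k).
  by rewrite coprimeXl // coprimeXr // coprime_sym prime_coprime ?pj.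
rewrite mobiusMprime ?pj // expnMn Gauss_dvd // pkd andbT /=.
by case: ifP; rewrite ?oppr0.
Qed.

(* n <= n^k for k >= 1: a k-th power dividing d bounds its base by d. *)
Lemma leq_self_expn n k : (0 < k)%N -> (n <= n ^ k)%N.
Proof. by case: n => // n k0; rewrite -[X in (X <= _)%N]expn1 leq_pexp2l. Qed.

Lemma sum_mobius_kdiv_eq0 k d p : (0 < k)%N -> (0 < d)%N ->
  prime p -> (p ^ k %| d)%N ->
  \sum_(0 <= n < d.+1) mobius_kdiv k d n = 0.
Proof.
move=> k0 d0 pp pkd; apply: (sum_prime_pairing (prime_gt0 pp)).
  move=> n dn; rewrite /mobius_kdiv; case: ifP => // /(dvdn_leq d0).
  by have := leq_self_expn n k0; lia.
by move=> j; apply: mobius_kdivMprime.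
Qed.

Lemma fyk_coef_range (R : realType) (y : R) k m N : (0 < k)%N -> (0 < m < N)%N ->
  fyk_coef k y m =
  \sum_(0 <= n < N | y < n%:R) (if (n ^ k == m)%N then mobius n else 0).
Proof.
move=> k0 /andP[m0 mN]; rewrite /fyk_coef -big_mkcondr [LHS]big_mkcond [RHS]big_mkcond /=.
apply: eq_sum_nat_support => n; apply: contraNeq; case: ifP => // /andP[_ /eqP nkm] _.
  have := leq_self_expn n k0; case: n nkm => [|n]; first by rewrite exp0n //; lia.
  by move=> <-; lia.
by have := leq_self_expn n k0; rewrite nkm; lia.
Qed.

(* Exchanging the two sums of the Dirichlet convolution:
   a_d = \sum_{n > y, n^k | d} mu(n). *)
Lemma zeta_fy_coefE (R : realType) (y : R) k d : (0 < k)%N -> (0 < d)%N ->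
  zeta_fy_coef k y d = \sum_(0 <= n < d.+1 | y < n%:R) mobius_kdiv k d n.
Proof.
move=> k0 d0; rewrite /zeta_fy_coef big_nat_cond.
rewrite (eq_bigr (fun m => \sum_(0 <= n < d.+1 | y < n%:R)
                             (if (n ^ k == m)%N then mobius n else 0))); last first.
  by move=> m /andP[/andP[m0 md] _]; apply: fyk_coef_range => //; rewrite m0.
rewrite -big_nat_cond exchange_big_nat; apply: eq_bigr => n _.
rewrite big_mkcond /= /mobius_kdiv; case: ifP => nkd; last first.
  rewrite big1 // => m _; case: ifP => // md; case: eqP => [nkm | //].
  by move: nkd; rewrite nkm md.
have nk0 : (0 < n ^ k)%N := dvdn_gt0 d0 nkd.
rewrite (@eq_sum_nat_support _ _ 1 d.+1 (n ^ k) (n ^ k).+1) ?big_nat1 ?eqxx ?nkd //.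
  all: move=> m; have [<- | _] := eqVneq (n ^ k)%N m; rewrite /= ?if_same //.
  all: by move=> /negP[]; have := dvdn_leq d0 nkd; lia.
Qed.

Lemma count_le_bound (R : realType) (y : R) N : 0 <= y ->
  ((\sum_(1 <= n < N.+1 | ~~ (y < n%:R)) (1 : int))%:~R : R) <= y.
Proof.
move=> y0; elim: N => [|N IH]; first by rewrite big_geq.
rewrite big_mkcond big_nat_recr //= -big_mkcond; case: ifP => [|_]; last by rewrite addr0.
rewrite -leNgt => Ny; apply: le_trans Ny; rewrite intrD -natr1 lerD2r.
have count_le : \sum_(1 <= n < N.+1 | ~~ (y < n%:R)) (1 : int) <= N%:Z.
  apply: (@le_trans _ _ (\sum_(1 <= n < N.+1) (1 : int))).
    by rewrite [X in X <= _]big_mkcond; apply: ler_sum => n _; case: ifP.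
  by rewrite sumr_const_nat subn1 natz.
by rewrite -[N%:R]/(N%:Z%:~R) ler_int.
Qed.

Lemma norm_sum_small_indices (R : realType) (y : R) (F : nat -> int) N :
  0 <= y -> F 0 = 0 -> (forall n, `|F n| <= 1) ->
  ((`|\sum_(0 <= n < N.+1 | ~~ (y < n%:R)) F n|)%:~R : R) <= y.
Proof.
move=> y0 F0 F1; apply: le_trans (count_le_bound N y0); rewrite ler_int.
rewrite big_ltn_cond //= F0 add0r if_same (le_trans (ler_norm_sum _ _ _)) //.
by apply: ler_sum => n _; apply: F1.
Qed.

Theorem lemma1 (R : realType) (y : R) (k : nat) :
  1 <= y -> (2 <= k)%N ->
  forall d : nat, (1 <= d)%N -> ((`|zeta_fy_coef k y d|)%:~R : R) <= y.
Proof.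
move=> y1 k2 d d0; have k0 : (0 < k)%N by lia.
have y0 : 0 <= y := le_trans ler01 y1.
rewrite zeta_fy_coefE //.
have [/hasP[n] | no_large] := boolP (has (fun n => (y < n%:R) && (n ^ k %| d)%N)
                                        (index_iota 0 d.+1)).
  (* A large n with n^k | d gives a prime p with p^k | d, so the whole sum
     vanishes and a_d is minus the sum over the small indices. *)
  move=> _ /andP[yn nkd]; have n1 : (1 < n)%N by rewrite -(ltr_nat R) (le_lt_trans y1).
  have pkd : (pdiv n ^ k %| d)%N := dvdn_trans (dvdn_exp2r k (pdiv_dvd n)) nkd.
  have := sum_mobius_kdiv_eq0 k0 d0 (pdiv_prime n1) pkd.
  rewrite (bigID (fun n => y < n%:R)) /= => /eqP; rewrite addr_eq0 => /eqP ->.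
  rewrite normrN; apply: norm_sum_small_indices => // [|m]; rewrite /mobius_kdiv.
    by rewrite mobius0 if_same.
  by case: ifP => // _; apply: mobius_norm.
rewrite big1_seq ?normr0 // => n /andP[yn]; rewrite /mobius_kdiv; case: ifP => // nkd nd.
by case/hasP: no_large; exists n; rewrite ?yn.
Qed.
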